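(* Let $f:\mathbb{R}^{n\times n}\to\mathbb{R}$ be differentiable with $\|\nabla f(X)-\nabla f(Y)\|_{\mathsf F}\le L\|X-Y\|_{\mathsf F}$ for all $X,Y\in\mathcal{D}_{[0,1]^n}$. Let $0<p<1$, $\epsilon\ge0$, $\sigma>0$, and let $\bar X\in\mathcal{D}_n$ be a KKT point of \[ \min_{X\in\mathcal{D}_n}\ f(X)+\sigma\sum_{i,j=1}^n (X_{ij}+\epsilon)^p, \] i.e. there exist $S\in\mathbb{R}^{n\times n}$ and $\lambda,\mu\in\mathbb{R}^n$ such that for all $i,j\in\{1,\dots,n\}$: $\bar X_{ij}S_{ij}=0$, $S_{ij}\ge0$, and $(W_{ij}-\lambda_i-\mu_j)(\bar X_{ij}+\epsilon)+\sigma p(\bar X_{ij}+\epsilon)^p=\epsilon S_{ij}$, where $W=\nabla f(\bar X)$. Define \[ \bar c=\Big(\|\bar X\|_0^{1-p}(n+\|\bar X\|_0\epsilon)^p-(n-1)(1+\epsilon)^{p-1}+\sqrt{2n}\,\frac{L\sqrt n+\|\nabla f(\mathbf 0)\|_{\mathsf F}}{\sigma p}\Big)^{\frac{1}{p-1}} . \] Then every $(i,j)$ with $\bar X_{ij}>0$ satisfies $\bar X_{ij}\ge\max(\bar c-\epsilon,0)$.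
   Context: $\mathcal{D}_n=\{X\in\mathbb{R}^{n\times n}: X\mathbf{e}=X^{\mathsf T}\mathbf{e}=\mathbf{e},\ X\ge0\}$ ($\mathbf{e}$ the all-ones vector), $\mathcal{D}_{[0,1]^n}=\{X\in\mathbb{R}^{n\times n}:0\le X_{ij}\le1\}$, $\|X\|_0$ is the number of nonzero entries of $X$, $\mathbf 0$ is the zero matrix, $\|\cdot\|_{\mathsf F}$ the Frobenius norm. *)

From HB Require Import structures.
From mathcomp Require Import all_boot all_order all_algebra.
From mathcomp Require Import all_classical all_reals all_analysis.
Set Implicit Arguments. Unset Strict Implicit. Unset Printing Implicit Defensive.
Import Order.TTheory GRing.Theory Num.Theory.
Import numFieldNormedType.Exports.
Local Open Scope ring_scope.

Definition frob {R : realType} {n : nat} (X : 'M[R]_n) : R :=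
  Num.sqrt (\sum_(i < n) \sum_(j < n) X i j ^+ 2).

Definition nnz {R : realType} {n : nat} (X : 'M[R]_n) : nat :=
  #|[set ij : 'I_n * 'I_n | X ij.1 ij.2 != 0]|.

Definition doubly_stochastic {R : realType} {n : nat} (X : 'M[R]_n) : Prop :=
  (forall i j, 0 <= X i j) /\
  (forall i, \sum_(j < n) X i j = 1) /\
  (forall j, \sum_(i < n) X i j = 1).

Definition unit_box {R : realType} {n : nat} (X : 'M[R]_n) : Prop :=
  forall i j, 0 <= X i j <= 1.

Definition is_gradient {R : realType} {n : nat}
  (f : 'M[R]_n -> R) (G : 'M[R]_n -> 'M[R]_n) : Prop :=
  forall X, differentiable f X /\
    forall H, ('d f X : 'M[R]_n -> R) H = \sum_(i < n) \sum_(j < n) G X i j * H i j.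

(* On the support of X the KKT conditions read W_kl - lam_k - mu_l = - sigma p q_kl with
   q := (X + eps)^(p-1).  Since X is doubly stochastic and X_ij > 0, Hall's theorem gives
   a permutation s with s i = j whose permutation matrix P is supported in X.  Pairing the
   multiplier identity against the doubly stochastic matrices X and P cancels lam and mu:
     sigma p (sum_k q_(k, s k) - sum_kl X_kl q_kl) = <X - P, W>.
   As X <= 1 and p - 1 < 0, the first sum is at least q_ij + (n - 1) (1 + eps)^(p-1);
   concavity of t^p bounds the second by ||X||_0^(1-p) (n + ||X||_0 eps)^p; and
   Cauchy-Schwarz with ||X - P|| <= sqrt (2n), ||W|| <= L sqrt n + ||G 0|| bounds the
   right-hand side.  Solving for q_ij and raising to the power 1/(p-1) < 0 concludes. *)

From mathcomp Require Import all_boot all_order all_algebra perm.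
From mathcomp Require Import reals exp.
From mathcomp Require Import zify ring lra.
Set Implicit Arguments. Unset Strict Implicit. Unset Printing Implicit Defensive.

Section Hall.
Variables (T : finType) (e : rel T).
Implicit Types (A B C : {set T}) (f : T -> T).

Definition neighbours (B A : {set T}) : {set T} := [set l in B | [exists k in A, e k l]].

Definition hall_condition (A B : {set T}) : Prop :=
  forall A' : {set T}, A' \subset A -> #|A'| <= #|neighbours B A'|.

Definition matching (A B : {set T}) (f : T -> T) : Prop :=
  {in A &, injective f} /\ {in A, forall k, f k \in B /\ e k (f k)}.

Lemma neighbours_sub B A : neighbours B A \subset B.
Proof. by apply/subsetP => l; rewrite inE => /andP[]. Qed.

Lemma neighboursD B B' A : neighbours (B :\: B') A = neighbours B A :\: B'.
Proof. by apply/setP => l; rewrite !inE andbA. Qed.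

Lemma neighboursU B A A' : neighbours B (A :|: A') = neighbours B A :|: neighbours B A'.
Proof.
apply/setP => l; rewrite !inE -andb_orr; congr (_ && _).
apply/existsP/orP => [[k /andP[]]|[|]/existsP[k /andP[kA ekl]]].
- by rewrite inE => /orP[] kA ekl; [left|right]; apply/existsP; exists k; rewrite kA.
- by exists k; rewrite inE kA.
- by exists k; rewrite inE kA orbT.
Qed.

Lemma neighbours_subset B A A' : A' \subset A ->
  neighbours (neighbours B A) A' = neighbours B A'.
Proof.
move=> sA'A; apply/setP => l; rewrite !inE -andbA; congr (_ && _).
apply/andb_idl => /existsP[k /andP[kA' ekl]].
by apply/existsP; exists k; rewrite (subsetP sA'A k kA').
Qed.

Lemma matching1 k l : e k l -> matching [set k] [set l] (fun=> l).
Proof. by split=> [x y | x]; rewrite !inE => /eqP->; [move=> /eqP-> | rewrite eqxx]. Qed.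

Lemma matchingU A1 A2 B1 B f1 f2 : B1 \subset B ->
  matching A1 B1 f1 -> matching A2 (B :\: B1) f2 ->
  matching (A1 :|: A2) B (fun k => if k \in A1 then f1 k else f2 k).
Proof.
move=> sB1B [inj1 f1A1] [inj2 f2A2].
have inA2 k : k \in A1 :|: A2 -> k \notin A1 -> k \in A2.
  by rewrite inE => /orP[-> //|].
have f2_notin k : k \in A2 -> f2 k \notin B1.
  by move/f2A2 => []; rewrite inE => /andP[].
split=> [x y xA yA /=|k kA /=].
  case: ifP => x1; case: ifP => y1.
  - exact: inj1.
  - move=> fxy; have := f2_notin y (inA2 y yA (negbT y1)).
    by rewrite -fxy (f1A1 x x1).1.
  - move=> fxy; have := f2_notin x (inA2 x xA (negbT x1)).
    by rewrite fxy (f1A1 y y1).1.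
  - by apply: inj2; apply: inA2; rewrite ?x1 ?y1.
case: ifP => k1; first by have [/(subsetP sB1B)] := f1A1 k k1.
by have [] := f2A2 k (inA2 k kA (negbT k1)); rewrite inE => /andP[].
Qed.

Lemma hall_condition_tight A B A0 : hall_condition A B -> A0 \subset A ->
    #|neighbours B A0| = #|A0| ->
  hall_condition A0 (neighbours B A0) /\
  hall_condition (A :\: A0) (B :\: neighbours B A0).
Proof.
move=> hAB sA0A tightA0; split=> [A' sA'A0|C].
  by rewrite neighbours_subset //; apply: hAB; apply: subset_trans sA'A0 sA0A.
rewrite subsetD => /andP[sCA disjC].
have := hAB (C :|: A0); rewrite subUset sCA sA0A => /(_ isT).
rewrite cardsU (disjoint_setI0 disjC) cards0 subn0 neighboursU neighboursD.
set N := neighbours B C; set N0 := neighbours B A0 in tightA0 *.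
have -> : N :|: N0 = N :\: N0 :|: N0.
  by apply/setP => l; rewrite !in_setU in_setD; case: (l \in N0); rewrite ?orbT ?andbT.
have := (leq_card_setU (N :\: N0) N0).1; lia.
Qed.

Lemma hall_condition_slack A B k0 l0 : k0 \in A -> hall_condition A B ->
    (forall C, C \subset A -> 0 < #|C| -> C != A -> #|neighbours B C| != #|C|) ->
  hall_condition (A :\ k0) (B :\ l0).
Proof.
move=> k0A hAB slackA C; rewrite subsetD1 => /andP[sCA k0C].
have [-> // | C_gt0] := posnP #|C|.
have CneA : C != A by apply: contraNneq k0C => ->.
have := slackA C sCA C_gt0 CneA; have := hAB C sCA.
by rewrite neighboursD (cardsD1 l0 (neighbours B C)); lia.
Qed.

(* Halmos-Vaughan induction: either some nonempty proper A0 is tight and A0, A :\: A0 are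
   matched separately, or every such subset has a surplus and any edge k0 l0 can be kept. *)
Theorem hall_matching A B : hall_condition A B -> exists f, matching A B f.
Proof.
have [m] := ubnP #|A|; elim: m A B => // m IH A B /ltnSE leAm hAB.
have [->|[k0 k0A]] := set_0Vmem A; first by exists id; split=> // k; rewrite inE.
have IHA A' B' : A' \proper A -> hall_condition A' B' -> exists f, matching A' B' f.
  by move=> /proper_card ltA'A; apply: IH; apply: leq_trans ltA'A leAm.
case: (pickP [pred A0 : {set T} | [&& A0 \subset A, 0 < #|A0|, A0 != A
                                     & #|neighbours B A0| == #|A0|]]) => [A0|slackA].
  case/and4P=> sA0A A0_gt0 A0neA /eqP tightA0.
  have [hA0 hA0'] := hall_condition_tight hAB sA0A tightA0.
  have [f0 mf0] : exists f, matching A0 (neighbours B A0) f.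
    by apply: IHA hA0; rewrite properEneq A0neA.
  have [f1 mf1] : exists f, matching (A :\: A0) (B :\: neighbours B A0) f.
    apply: IHA hA0'; rewrite properEcard subsetDl cardsDS //=.
    by have := subset_leq_card sA0A; lia.
  exists (fun k => if k \in A0 then f0 k else f1 k).
  by rewrite -(setID A A0) (setIidPr sA0A); apply: matchingU (neighbours_sub _ _) mf0 mf1.
have : 0 < #|neighbours B [set k0]| by apply: leq_trans (hAB _ _); rewrite ?cards1 ?sub1set.
case/card_gt0P=> l0; rewrite !inE => /andP[l0B /existsP[k]]; rewrite inE => /andP[/eqP-> ek0l0].
have [f mf] : exists f, matching (A :\ k0) (B :\ l0) f.
  apply: IHA (properD1 k0A) _; apply: hall_condition_slack k0A hAB _ => C sCA C_gt0 CneA.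
  by have := slackA C; rewrite /= sCA C_gt0 CneA => /negbT.
exists (fun k => if k \in [set k0] then l0 else f k).
by rewrite -(setD1K k0A); apply: matchingU (matching1 ek0l0) mf; rewrite sub1set.
Qed.

End Hall.

Import Order.TTheory GRing.Theory Num.Theory.
Local Open Scope ring_scope.

Section Powers.
Variable R : realType.

Lemma young_powR (t a p : R) : 0 <= t -> 0 <= a -> 0 < p < 1 ->
  t `^ p * a `^ (1 - p) <= p * t + (1 - p) * a.
Proof.
move=> t0 a0 /andP[p0 p1]; have q0 : 0 < 1 - p by rewrite subr_gt0.
have conj : p^-1^-1 + (1 - p)^-1^-1 = 1 by rewrite !invrK addrC subrK.
have := conjugate_powR (powR_ge0 t p) (powR_ge0 a (1 - p)) _ _ conj.
rewrite !invr_gt0 !invrK -!powRrM !mulfV ?gt_eqF // !powRr1 // => /(_ p0 q0).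
by rewrite [t * p]mulrC [a * _]mulrC.
Qed.

Lemma lt0_ger_powR (x y r : R) : r < 0 -> 0 < x -> x <= y -> y `^ r <= x `^ r.
Proof.
move=> r0 x0 xy; have y0 : 0 < y := lt_le_trans x0 xy.
rewrite -[r]opprK !(powRN _ (- r)) lef_pV2 ?posrE ?powR_gt0 //.
by apply: (ge0_ler_powR (r := - r)); rewrite // ?oppr_ge0 ?nnegrE ltW.
Qed.

Lemma powR_inv_le (x c r : R) : r < 0 -> 0 < x -> x `^ r <= c -> c `^ r^-1 <= x.
Proof.
move=> r0 x0 xc; rewrite -[leRHS](powRr1 (ltW x0)) -(mulfV (ltr0_neq0 r0)) powRrM.
by apply: lt0_ger_powR; rewrite ?invr_lt0 ?powR_gt0.
Qed.

Lemma sum_powR_le_card (I : finType) (A : {set I}) (t : I -> R) (p : R) :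
    0 < p < 1 -> (0 < #|A|)%N -> (forall k, k \in A -> 0 < t k) ->
  \sum_(k in A) t k `^ p <= #|A|%:R `^ (1 - p) * (\sum_(k in A) t k) `^ p.
Proof.
(* Young's inequality at the mean a := s / m, summed over A. *)
move=> p01 A_gt0 t_gt0; set m : R := #|A|%:R; set s := \sum_(k in A) t k.
have m_gt0 : 0 < m by rewrite ltr0n.
have s_gt0 : 0 < s.
  have [k kA] := card_gt0P A_gt0.
  by rewrite /s (bigD1 k) //= ltr_pwDl ?t_gt0 // sumr_ge0 // => l /andP[lA _]; rewrite ltW ?t_gt0.
pose a := s / m; have a_gt0 : 0 < a by rewrite divr_gt0.
have a_cancel : a `^ (p - 1) * a `^ (1 - p) = 1.
  rewrite -powRD; last by rewrite (gt_eqF a_gt0) implybT.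
  by rewrite addrA subrK subrr; apply: powRr0.
have termwise k : k \in A -> t k `^ p <= a `^ (p - 1) * (p * t k + (1 - p) * a).
  move=> kA; have -> : t k `^ p = a `^ (p - 1) * (t k `^ p * a `^ (1 - p)).
    by rewrite mulrCA a_cancel mulr1.
  by rewrite ler_wpM2l ?powR_ge0 // young_powR ?ltW ?t_gt0.
apply: le_trans (ler_sum _ termwise) _.
rewrite -mulr_sumr big_split /= -!mulr_sumr sumr_const -/s -mulr_natr -/m mulVf ?gt_eqF //.
have [p_gt0 _] := andP p01.
have [s_ge0 m_ge0] := (ltW s_gt0, ltW m_gt0).
rewrite mulr1 -mulrDl subrKC mul1r /a powRM ?invr_ge0 // -powR_inv1 // -powRrM.
by rewrite mulrAC mulrC [s `^ _ * s]mulrC mulr_powRB1 // mulN1r opprB.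
Qed.

Lemma sum_powR_lt0_ge n (y : 'I_n -> R) (c r : R) i :
    r < 0 -> (forall k, 0 < y k <= c) ->
  y i `^ r + (n%:R - 1) * c `^ r <= \sum_k y k `^ r.
Proof.
move=> r0 y_bd; rewrite (bigD1 i) //= lerD2l.
have split_i : \sum_(k < n) c `^ r = c `^ r + \sum_(k < n | k != i) c `^ r by rewrite (bigD1 i).
rewrite sumr_const card_ord -mulr_natl in split_i.
rewrite mulrBl mul1r split_i addrC addKr; apply: ler_sum => k _.
by have /andP[yk0 ykc] := y_bd k; apply: lt0_ger_powR.
Qed.

Lemma kkt_multiplier (x s w c eps p : R) :
    0 <= eps -> 0 < p -> 0 < x -> x * s = 0 ->
    w * (x + eps) + c * (x + eps) `^ p = eps * s ->
  w = - (c * (x + eps) `^ (p - 1)).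
Proof.
move=> eps0 p0 x0 xs0 kkt; have xeps0 : 0 < x + eps by rewrite ltr_wpDr.
have s0 : s = 0 by move/eqP: xs0; rewrite mulf_eq0 gt_eqF //= => /eqP.
have : (x + eps) * (w + c * (x + eps) `^ (p - 1)) = 0.
  by rewrite mulrDr mulrCA mulr_powRB1 ?(ltW xeps0) // mulrC kkt s0 mulr0.
by move/eqP; rewrite mulf_eq0 gt_eqF //= addr_eq0 => /eqP.
Qed.

End Powers.

Section Frobenius.
Variables (R : realType) (n : nat).
Implicit Types A B C : 'M[R]_n.

Definition mxdot A B : R := \sum_i \sum_j A i j * B i j.

Lemma mxdotC A B : mxdot A B = mxdot B A.
Proof. by apply: eq_bigr => i _; apply: eq_bigr => j _; rewrite mulrC. Qed.

Lemma mxdot0l A : mxdot 0 A = 0.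
Proof. by rewrite /mxdot big1 // => i _; rewrite big1 // => j _; rewrite mxE mul0r. Qed.

Lemma mxdotDr A B C : mxdot A (B + C) = mxdot A B + mxdot A C.
Proof.
rewrite /mxdot -big_split; apply: eq_bigr => i _.
by rewrite -big_split; apply: eq_bigr => j _; rewrite mxE mulrDr.
Qed.

Lemma mxdotBl A B C : mxdot (A - B) C = mxdot A C - mxdot B C.
Proof.
rewrite /mxdot -sumrB; apply: eq_bigr => i _.
by rewrite -sumrB; apply: eq_bigr => j _; rewrite !mxE mulrBl.
Qed.

Lemma frob_ge0 A : 0 <= frob A.
Proof. exact: sqrtr_ge0. Qed.

Lemma frob_sq A : frob A ^+ 2 = mxdot A A.
Proof.
rewrite /frob sqr_sqrtr; last by do 2!(apply: sumr_ge0 => ? _); apply: sqr_ge0.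
by apply: eq_bigr => i _; apply: eq_bigr => j _; rewrite expr2.
Qed.

Lemma frob_eq0 A : frob A = 0 -> A = 0.
Proof.
move=> A0; apply/matrixP => i j; rewrite mxE; apply/eqP; rewrite -sqrf_eq0 expr2; apply/eqP.
have AA0 : mxdot A A = 0 by rewrite -frob_sq A0 expr0n.
have rowA0 k : \sum_l A k l * A k l = 0.
  by apply: (psumr_eq0P _ AA0) => // k' _; apply: sumr_ge0 => l _; rewrite -expr2 sqr_ge0.
by apply: (psumr_eq0P _ (rowA0 i)) => // l _; rewrite -expr2 sqr_ge0.
Qed.

Lemma mxdot_le_frob A B : mxdot A B <= frob A * frob B.
Proof.
have [A0|nzA] := eqVneq (frob A) 0; first by rewrite A0 mul0r (frob_eq0 A0) mxdot0l.
have [B0|nzB] := eqVneq (frob B) 0; first by rewrite B0 mulr0 mxdotC (frob_eq0 B0) mxdot0l.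
have AB_gt0 : 0 < frob A * frob B by rewrite mulr_gt0 // lt_def ?nzA ?nzB frob_ge0.
have : 0 <= \sum_i \sum_j (frob B * A i j - frob A * B i j) ^+ 2.
  by do 2!(apply: sumr_ge0 => ? _); apply: sqr_ge0.
have -> : \sum_i \sum_j (frob B * A i j - frob A * B i j) ^+ 2
    = frob B ^+ 2 * mxdot A A + frob A ^+ 2 * mxdot B B - 2 * (frob A * frob B) * mxdot A B.
  rewrite /mxdot !mulr_sumr -big_split -sumrB; apply: eq_bigr => i _.
  by rewrite !mulr_sumr -big_split -sumrB; apply: eq_bigr => j _ /=; ring.
rewrite -!frob_sq; nra.
Qed.

End Frobenius.

Section DoublyStochastic.
Variables (R : realType) (n : nat).
Implicit Types X Y : 'M[R]_n.

Definition positive_entry X : rel 'I_n := fun k l => 0 < X k l.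

Lemma ds_le1 X i j : doubly_stochastic X -> X i j <= 1.
Proof.
move=> [X0 [Xrow _]]; rewrite -(Xrow i) (bigD1 j) //= lerDl.
by apply: sumr_ge0 => l _; apply: X0.
Qed.

Lemma ds_unit_box X : doubly_stochastic X -> unit_box X.
Proof. by move=> dsX i j; rewrite ds_le1 // andbT; case: dsX. Qed.

Lemma ds_sum X : doubly_stochastic X -> \sum_i \sum_j X i j = n%:R.
Proof.
by move=> [_ [Xrow _]]; under eq_bigr do rewrite Xrow; rewrite sumr_const card_ord.
Qed.

Lemma perm_mxE (s : 'S_n) i j : (perm_mx s : 'M[R]_n) i j = (s i == j)%:R.
Proof. by rewrite !mxE. Qed.

Lemma mxdot_perm_mx (s : 'S_n) (A : 'M[R]_n) : mxdot (perm_mx s) A = \sum_i A i (s i).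
Proof.
apply: eq_bigr => i _; rewrite (bigD1 (s i)) //= perm_mxE eqxx mul1r big1 ?addr0 //.
by move=> j /negbTE sij; rewrite perm_mxE eq_sym sij mul0r.
Qed.

Lemma perm_mx_ds (s : 'S_n) : doubly_stochastic (perm_mx s : 'M[R]_n).
Proof.
split; first by move=> i j; rewrite perm_mxE ler0n.
split=> [i|j].
  rewrite (bigD1 (s i)) //= perm_mxE eqxx big1 ?addr0 // => j /negbTE sij.
  by rewrite perm_mxE eq_sym sij.
rewrite (bigD1 (s^-1 j)%g) //= perm_mxE permKV eqxx big1 ?addr0 // => i.
by apply: contraNeq; rewrite perm_mxE pnatr_eq0 eqb0 negbK => /eqP <-; rewrite permK.
Qed.

Lemma mxdot_ds_shift X (lam mu : 'I_n -> R) : doubly_stochastic X ->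
  mxdot X (\matrix_(i, j) (lam i + mu j)) = \sum_i lam i + \sum_j mu j.
Proof.
move=> [_ [Xrow Xcol]].
have -> : mxdot X (\matrix_(i, j) (lam i + mu j))
    = \sum_i \sum_j X i j * lam i + \sum_i \sum_j X i j * mu j.
  rewrite -big_split; apply: eq_bigr => i _.
  by rewrite -big_split; apply: eq_bigr => j _ /=; rewrite mxE mulrDr.
congr (_ + _); first by apply: eq_bigr => i _; rewrite -mulr_suml Xrow mul1r.
by rewrite exchange_big; apply: eq_bigr => j _; rewrite -mulr_suml Xcol mul1r.
Qed.

Lemma frob_ds_le X : doubly_stochastic X -> frob X <= Num.sqrt n%:R.
Proof.
move=> dsX; rewrite -(ds_sum dsX); apply: ler_wsqrtr.
apply: ler_sum => i _; apply: ler_sum => j _.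
by have /andP[] := ds_unit_box dsX i j; nra.
Qed.

Lemma frob_sub_ds_le X Y : doubly_stochastic X -> doubly_stochastic Y ->
  frob (X - Y) <= Num.sqrt (2 * n%:R).
Proof.
move=> dsX dsY; apply: ler_wsqrtr.
apply: (@le_trans _ _ (\sum_i \sum_j (X i j + Y i j))).
  apply: ler_sum => i _; apply: ler_sum => j _; rewrite !mxE.
  by have /andP[] := ds_unit_box dsX i j; have /andP[] := ds_unit_box dsY i j; nra.
under eq_bigr do rewrite big_split; rewrite big_split /= !ds_sum //; lra.
Qed.

Lemma ds_support_mass X i (A : {set 'I_n}) : doubly_stochastic X -> i \notin A ->
  #|A|%:R + \sum_(l in neighbours (positive_entry X) setT A) X i l
    <= #|neighbours (positive_entry X) setT A|%:R.
Proof.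
(* Rows of A put all their mass on the columns of N, which row i shares. *)
move=> [X0 [Xrow Xcol]] iA; set N := neighbours _ _ _.
have rowA k : k \in A -> \sum_(l in N) X k l = 1.
  move=> kA; rewrite -(Xrow k) big_mkcond /=; apply: eq_bigr => l _.
  case: ifPn => // lN; apply/eqP; rewrite eq_le X0 /= leNgt; apply: contra lN => Xkl.
  by rewrite /N inE in_setT; apply/existsP; exists k; rewrite kA.
have colA l : \sum_(k in A) X k l + X i l <= 1.
  rewrite -(Xcol l) [leRHS](bigD1 i) //= [leRHS]addrC lerD2r [leRHS](bigID [in A]) /=.
  have -> : \sum_(k | (k != i) && (k \in A)) X k l = \sum_(k in A) X k l.
    by apply: eq_bigl => k; case: eqVneq => // ->; rewrite (negbTE iA).
  by rewrite lerDl sumr_ge0.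
rewrite -[#|A|%:R]sumr_const -[#|N|%:R]sumr_const (eq_bigr _ (fun k kA => esym (rowA k kA))).
rewrite exchange_big -big_split /=; apply: ler_sum => l _; exact: colA.
Qed.

Lemma ds_hall_condition X i j : doubly_stochastic X -> 0 < X i j ->
  hall_condition (positive_entry X) [set~ i] [set~ j].
Proof.
move=> dsX Xij A sAi; rewrite -setTD neighboursD.
have iA : i \notin A by apply/negP => /(subsetP sAi); rewrite !inE eqxx.
have := ds_support_mass dsX iA.
set N := neighbours _ _ _ => massA.
have sum_ge0 : 0 <= \sum_(l in N) X i l by apply: sumr_ge0 => l _; case: dsX.
have cardN := cardsD1 j N; case: (boolP (j \in N)) => jN.
  have Xij_le : X i j <= \sum_(l in N) X i l.
    by rewrite (bigD1 j) //= lerDl sumr_ge0 // => l _; case: dsX.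
  have : (#|A|%:R : R) < #|N|%:R by lra.
  by rewrite ltr_nat cardN jN /=; lia.
have : (#|A|%:R : R) <= #|N|%:R by lra.
by rewrite ler_nat cardN (negbTE jN) /=; lia.
Qed.

Lemma ds_perm_support X i j : doubly_stochastic X -> 0 < X i j ->
  exists s : 'S_n, s i = j /\ forall k, 0 < X k (s k).
Proof.
move=> dsX Xij.
have [f mf] := hall_matching (ds_hall_condition dsX Xij).
pose g k := if k \in [set i] then j else f k.
have [ginj gpos] : matching (positive_entry X) [set: 'I_n] [set: 'I_n] g.
  rewrite -{1}(setUCr [set i]).
  by apply: matchingU (@matching1 _ (positive_entry X) i j Xij) _; rewrite ?subsetT ?setTD.
exists (perm (fun x y => ginj x y (in_setT x) (in_setT y))); split=> [|k]; rewrite permE.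
  by rewrite /g inE eqxx.
exact: (gpos k (in_setT k)).2.
Qed.

Lemma ds_sum_powR_le X i j (eps p : R) :
    doubly_stochastic X -> 0 < X i j -> 0 <= eps -> 0 < p < 1 ->
  \sum_k \sum_l X k l * (X k l + eps) `^ (p - 1)
    <= (nnz X)%:R `^ (1 - p) * (n%:R + (nnz X)%:R * eps) `^ p.
Proof.
move=> dsX Xij eps0 p01; have [X0 _] := dsX; have [p0 _] := andP p01.
rewrite /nnz; set A := [set kl | _].
have pos kl : kl \in A -> 0 < X kl.1 kl.2 + eps.
  by rewrite inE => nz; rewrite ltr_pwDl // lt_def nz X0.
apply: (@le_trans _ _ (\sum_(kl in A) (X kl.1 kl.2 + eps) `^ p)).
  rewrite pair_big [leRHS]big_mkcond /=; apply: ler_sum => -[k l] _ /=.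
  rewrite inE /=; have [->|nz] := eqVneq (X k l) 0; first by rewrite mul0r.
  have Xkl_eps : 0 <= X k l + eps by rewrite addr_ge0.
  by rewrite -(mulr_powRB1 Xkl_eps p0) ler_wpM2r ?powR_ge0 // lerDl.
have A_gt0 : (0 < #|A|)%N by apply/card_gt0P; exists (i, j); rewrite inE /= gt_eqF.
apply: le_trans (sum_powR_le_card p01 A_gt0 pos) _.
suff -> : \sum_(kl in A) (X kl.1 kl.2 + eps) = n%:R + #|A|%:R * eps by [].
rewrite big_split /= sumr_const mulr_natl -(ds_sum dsX) pair_big big_mkcond /=.
congr (_ + _); apply: eq_bigr => -[k l] _ /=; rewrite inE /=.
by case: eqVneq.
Qed.

Lemma kkt_gap X (W : 'M[R]_n) (lam mu : 'I_n -> R) (q : 'I_n -> 'I_n -> R) (c : R)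
    (s : 'S_n) :
    doubly_stochastic X -> (forall k, 0 < X k (s k)) ->
    (forall k l, 0 < X k l -> W k l - lam k - mu l = - (c * q k l)) ->
  c * (\sum_k q k (s k) - \sum_k \sum_l X k l * q k l) = mxdot (X - perm_mx s) W.
Proof.
move=> dsX Xs_gt0 slack; have [X0 _] := dsX.
set V := \matrix_(k, l) (W k l - lam k - mu l).
have -> : W = V + \matrix_(k, l) (lam k + mu l) by apply/matrixP => k l; rewrite !mxE; ring.
rewrite mxdotDr !mxdotBl (mxdot_ds_shift _ _ dsX) (mxdot_ds_shift _ _ (perm_mx_ds s)).
rewrite subrr addr0 mxdot_perm_mx.
have -> : mxdot X V = - (c * \sum_k \sum_l X k l * q k l).
  rewrite /mxdot mulr_sumr -sumrN; apply: eq_bigr => k _.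
  rewrite mulr_sumr -sumrN; apply: eq_bigr => l _; rewrite mxE.
  have [->|nz] := eqVneq (X k l) 0; first by rewrite !mul0r mulr0 oppr0.
  by rewrite slack ?lt_def ?nz ?X0 //; ring.
have -> : \sum_k V k (s k) = - (c * \sum_k q k (s k)).
  by rewrite mulr_sumr -sumrN; apply: eq_bigr => k _; rewrite mxE slack.
ring.
Qed.

End DoublyStochastic.

Section Lipschitz.
Variables (R : realType) (n : nat) (G : 'M[R]_n -> 'M[R]_n) (L : R).
Hypothesis lipG : forall X Y : 'M[R]_n, unit_box X -> unit_box Y ->
  frob (G X - G Y) <= L * frob (X - Y).

Lemma unit_box0 : unit_box (0 : 'M[R]_n).
Proof. by move=> i j; rewrite mxE lexx ler01. Qed.

Lemma lipschitz_grad_le X : doubly_stochastic X -> X != 0 ->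
  frob (G X - G 0) <= L * Num.sqrt n%:R.
Proof.
move=> dsX nzX; have := lipG (ds_unit_box dsX) unit_box0; rewrite subr0 => lipX.
have frobX_gt0 : 0 < frob X.
  by rewrite lt_def frob_ge0 andbT; apply: contra_neq nzX; apply: frob_eq0.
have L0 : 0 <= L by rewrite -(pmulr_lge0 _ frobX_gt0); apply: le_trans lipX; apply: frob_ge0.
by apply: le_trans lipX _; rewrite ler_wpM2l // frob_ds_le.
Qed.

Lemma mxdot_ds_grad_le X Y : doubly_stochastic X -> doubly_stochastic Y -> X != 0 ->
  mxdot (X - Y) (G X) <= Num.sqrt (2 * n%:R) * (L * Num.sqrt n%:R + frob (G 0)).
Proof.
move=> dsX dsY nzX; have frobXY := frob_sub_ds_le dsX dsY.
rewrite -[G X](subrK (G 0)) mxdotDr mulrDr.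
apply: lerD; apply: le_trans (mxdot_le_frob _ _) _.
  by apply: ler_pM; rewrite ?frob_ge0 ?lipschitz_grad_le.
by rewrite ler_wpM2r ?frob_ge0.
Qed.
End Lipschitz.

Theorem theorem3p4 (R : realType) (n : nat)
  (f : 'M[R]_n -> R) (G : 'M[R]_n -> 'M[R]_n) (L p eps sigma : R)
  (Xb S : 'M[R]_n) (lam mu : 'I_n -> R) :
  is_gradient f G ->
  (forall X Y : 'M[R]_n, unit_box X -> unit_box Y ->
     frob (G X - G Y) <= L * frob (X - Y)) ->
  0 < p -> p < 1 -> 0 <= eps -> 0 < sigma ->
  doubly_stochastic Xb ->
  (forall i j, Xb i j * S i j = 0) ->
  (forall i j, 0 <= S i j) ->
  (forall i j, (G Xb i j - lam i - mu j) * (Xb i j + eps)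
                 + sigma * p * (Xb i j + eps) `^ p = eps * S i j) ->
  let cbar :=
    ((nnz Xb)%:R `^ (1 - p) * (n%:R + (nnz Xb)%:R * eps) `^ p
     - (n%:R - 1) * (1 + eps) `^ (p - 1)
     + Num.sqrt (2 * n%:R) * ((L * Num.sqrt n%:R + frob (G 0)) / (sigma * p)))
    `^ (1 / (p - 1)) in
  forall i j, 0 < Xb i j -> Num.max (cbar - eps) 0 <= Xb i j.
Proof.
move=> _ lipG p_gt0 p_lt1 eps_ge0 sigma_gt0 dsX XS _ kkt cbar i j Xij.
have p01 : 0 < p < 1 by rewrite p_gt0 p_lt1.
have pm1_lt0 : p - 1 < 0 by rewrite subr_lt0.
have sp_gt0 : 0 < sigma * p by rewrite mulr_gt0.
have [s [sij Xs_gt0]] := ds_perm_support dsX Xij.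
have slack k l : 0 < Xb k l ->
    G Xb k l - lam k - mu l = - (sigma * p * (Xb k l + eps) `^ (p - 1)).
  by move=> Xkl; apply: kkt_multiplier eps_ge0 p_gt0 Xkl (XS k l) (kkt k l).
have gap := kkt_gap (q := fun k l => (Xb k l + eps) `^ (p - 1)) dsX Xs_gt0 slack.
have nzX : Xb != 0 by apply: contraTneq Xij => ->; rewrite mxE ltxx.
have grad := mxdot_ds_grad_le lipG dsX (perm_mx_ds _ s) nzX.
have gap_le : \sum_k (Xb k (s k) + eps) `^ (p - 1)
      - \sum_k \sum_l Xb k l * (Xb k l + eps) `^ (p - 1)
    <= Num.sqrt (2 * n%:R) * ((L * Num.sqrt n%:R + frob (G 0)) / (sigma * p)).
  by rewrite mulrA ler_pdivlMr // mulrC gap.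
have lower : (Xb i j + eps) `^ (p - 1) + (n%:R - 1) * (1 + eps) `^ (p - 1)
    <= \sum_k (Xb k (s k) + eps) `^ (p - 1).
  rewrite -sij; apply: (sum_powR_lt0_ge (y := fun k => Xb k (s k) + eps)) pm1_lt0 _ => k.
  by rewrite lerD2r ds_le1 // andbT ltr_wpDr.
have upper := ds_sum_powR_le dsX Xij eps_ge0 p01.
rewrite ge_max (ltW Xij) andbT lerBlDr /cbar div1r.
apply: powR_inv_le pm1_lt0 _ _; first by rewrite ltr_wpDr.
lra.
Qed.
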